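(* Let $T$ be a lifted graph, $F\colon T\to T$ a continuous sun-like map of degree 1, ${\cal P}$ a basic partition of $F$ and ${\cal G}$ its covering graph. (i) Every connected component of ${\cal G}$ contains a vertex of the basis, and the number of connected components of ${\cal G}$ is finite and at most $\#{\cal P}$. (ii) Let ${\cal I}$ be the set of infinite paths $(\alpha_n)_{n\ge0}$ in ${\cal G}$ with $H(\alpha_0)=0$ and $H(\alpha_n)>0$ for all $n\ge1$. If $(\alpha_n)_{n\ge0}\in{\cal I}$ then $H(\alpha_n)=n$ for all $n\ge0$; moreover ${\cal I}$ is finite and $\#{\cal I}\le\#{\cal P}$. (iii) If $(\alpha_n)_{n\ge0}$ is an infinite path in ${\cal G}$, then either there exists a connected component $C$ of ${\cal G}$ such that $\alpha_n\in C$ for all sufficiently large $n$, or there exist $(\beta_n)_{n\ge0}\in{\cal I}$ and $N,M\ge0$ such that $\alpha_{N+n}=\beta_{M+n}$ for all $n\ge0$.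
   Context: A lifted graph is a connected topological space $T$ with a homeomorphism $h\colon\mathbb R\to h(\mathbb R)\subset T$ and a homeomorphism $\tau\colon T\to T$ such that $\tau(h(x))=h(x+1)$, the closure of each connected component of $T\setminus h(\mathbb R)$ is a topological finite graph meeting $h(\mathbb R)$ in exactly one point, and only finitely many such components have closure meeting $h([0,1])$. Identify $h(\mathbb R)$ with $\mathbb R$, write $x+m:=\tau^m(x)$; $r_{\mathbb R}\colon T\to\mathbb R$ is the identity on $\mathbb R$ and maps a component $C'$ of $T\setminus\mathbb R$ to the point $\overline{C'}\cap\mathbb R$. $F$ has degree 1 if $F(x+1)=F(x)+1$. Let $T_{\mathbb R}:=\overline{\bigcup_{n\ge0}F^n(\mathbb R)}$, $X:=\overline{T\setminus T_{\mathbb R}}\cap r_{\mathbb R}^{-1}([0,1))$. $F$ is sun-like if $(T\setminus T_{\mathbb R})\cap r_{\mathbb R}^{-1}([0,1))$ consists of finitely many intervals with pairwise disjoint closures $X^i$, $i\in\Lambda$ (branches), each a compact interval meeting $T_{\mathbb R}$ in one endpoint $\min X^i$ (fixing the order of $X^i$). A basic partition is a finite family ${\cal P}=\{X^i_j\}$ of pairwise disjoint nonempty compact intervals $X^i_1<\dots<X^i_{N_i}$ in $X^i$, with $\ell(X^i_j)\in\Lambda$, $p(X^i_j)\in\mathbb Z$, such that $F(X^i_j)\subset(X^{\ell(X^i_j)}+p(X^i_j))\cup\mathrm{Int}(T_{\mathbb R})$, $F(\min X^i_j)=\min X^{\ell(X^i_j)}+p(X^i_j)$, and $F(X\setminus\bigcup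 X^i_j)\cap(X+\mathbb Z)=\emptyset$. For $A_0,\dots,A_n\in{\cal P}$, $\langle A_0\dots A_n\rangle:=F^n(\{x\in T: F^i(x)\in A_i+\mathbb Z,\ 0\le i\le n\})\cap X$. $A_0\dots A_n\sim B_0\dots B_m$ iff for some $k\le\min(n,m)$, $A_{n-i}=B_{m-i}$ ($0\le i\le k$) and $\langle A_0\dots A_{n-k}\rangle=A_{n-k}=B_{m-k}=\langle B_0\dots B_{m-k}\rangle$. The covering graph ${\cal G}$: vertices are classes $A_0\dots A_n/\!\sim$ with $\langle A_0\dots A_n\rangle\ne\emptyset$; arrow $\alpha\to\beta$ iff $\alpha=A_0\dots A_n/\!\sim$, $\beta=A_0\dots A_nA_{n+1}/\!\sim$ for some $A_i\in{\cal P}$. The significant part of $A_0\dots A_n$ is $A_i\dots A_n$ with $i$ the largest index such that $A_0\dots A_n\sim A_i\dots A_n$ (it depends only on the class); the height $H(\alpha)$ of a vertex $\alpha$ is $n-i$, i.e. the length minus one of its significant part. The basis is the set of vertices of height $0$, i.e. $\{A/\!\sim: A\in{\cal P}\}$, identified with ${\cal P}$. An infinite path is a sequence $(\alpha_n)$ of vertices with $\alpha_n\to\alpha_{n+1}$ for all $n$. A subgraph is strongly connected if any two of its vertices $u,v$ are joined by an oriented path of positive length from $u$ to $v$ within it; connected components are the maximal strongly connected subgraphs. *)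

From HB Require Import structures.
From mathcomp Require Import all_boot all_order all_algebra.
From mathcomp Require Import all_classical all_reals all_analysis.
From mathcomp Require Import Rstruct Rstruct_topology.

Set Implicit Arguments.
Unset Strict Implicit.
Unset Printing Implicit Defensive.

Import Order.TTheory GRing.Theory Num.Theory.
Local Open Scope classical_set_scope.
Local Open Scope ring_scope.

Notation RR := Rdefinitions.R.

Section LiftedGraph.
Variable T : topologicalType.

(* f restricted to A is a homeomorphism onto its image (A, f A with the
   subspace topologies). *)
Definition embedding_on (A : set RR) (f : RR -> T) : Prop :=
  [/\ {within A, continuous f},
      (forall x y, A x -> A y -> f x = f y -> x = y)
    & forall U : set RR, open U ->
        exists V : set T, open V /\ f @` (U `&` A) = V `&` f @` A].

Definition unit_seg : set RR := [set t | 0 <= t <= 1].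

Definition arc (g : RR -> T) : Prop := embedding_on unit_seg g.

Definition finite_graph (G : set T) : Prop :=
  exists (m : nat) (g : 'I_m -> RR -> T),
    [/\ forall i, arc (g i),
        G = \bigcup_(i in [set: 'I_m]) (g i @` unit_seg)
      & forall i j, i != j ->
          (g i @` unit_seg) `&` (g j @` unit_seg) `<=`
          ([set g i 0; g i 1] `&` [set g j 0; g j 1])].

Definition homeo (tau tau' : T -> T) : Prop :=
  [/\ cancel tau tau', cancel tau' tau, continuous tau & continuous tau'].

Variables (h : RR -> T) (tau tau' : T -> T).

Definition cc (x : T) : set T := connected_component (~` range h) x.

Definition lifted_graph : Prop :=
  [/\ connected [set: T] /\ embedding_on setT h,
      homeo tau tau',
      (forall x, tau (h x) = h (x + 1)),
      (forall x, ~ range h x ->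
          finite_graph (closure (cc x)) /\
          exists t0, closure (cc x) `&` range h = [set h t0])
    & exists s : seq T, forall x, ~ range h x ->
        (exists t, 0 <= t <= 1 /\ closure (cc x) (h t)) ->
        exists y, List.In y s /\ cc x = cc y ].

(* x + m := tau^m(x), m an integer *)
Definition shift (m : int) (x : T) : T :=
  match m with
  | Posz p => iter p tau x
  | Negz p => iter p.+1 tau' x
  end.

Definition plusZ (A : set T) : set T :=
  [set z | exists (m : int) (y : T), A y /\ z = shift m y].

Definition rRpre (J : set RR) : set T :=
  [set x | (exists t, J t /\ x = h t) \/
           (~ range h x /\ exists t, J t /\ closure (cc x) (h t))].

Definition unit_co : set RR := [set t | 0 <= t < 1].

Variable F : T -> T.

Definition degree_one : Prop := forall x, F (tau x) = tau (F x).

Definition TR : set T := closure (\bigcup_(p in [set: nat]) (iter p F @` range h)).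

Definition Xset : set T := closure (~` TR) `&` rRpre unit_co.

Variables (n : nat) (gam : 'I_n -> RR -> T).

(* branch X^i, parametrized by gam i, with min X^i = gam i 0 *)
Definition Xb (i : 'I_n) : set T := gam i @` unit_seg.

Definition sun_like : Prop :=
  [/\ forall i, arc (gam i),
      ~` TR `&` rRpre unit_co =
         \bigcup_(i in [set: 'I_n]) (gam i @` [set t | 0 < t <= 1]),
      (forall i, closure (gam i @` [set t | 0 < t <= 1]) = Xb i),
      (forall i j, i != j -> Xb i `&` Xb j = set0)
    & forall i, Xb i `&` TR = [set gam i 0] ].

Variables (k : nat) (br : 'I_k -> 'I_n) (lo hi : 'I_k -> RR).
Variables (ell : 'I_k -> 'I_n) (per : 'I_k -> int).

Definition piece (j : 'I_k) : set T :=
  gam (br j) @` [set t | lo j <= t <= hi j].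

Definition basic_partition : Prop :=
  [/\ forall j, 0 <= lo j /\ lo j <= hi j /\ hi j <= 1,
      (forall j j', j != j' -> piece j `&` piece j' = set0),
      (forall j, F @` piece j `<=` (shift (per j) @` Xb (ell j)) `|` interior TR),
      (forall j, F (gam (br j) (lo j)) = shift (per j) (gam (ell j) 0))
    & forall x, Xset x -> (forall j, ~ piece j x) -> ~ plusZ Xset (F x) ].

Fixpoint follows (w : seq 'I_k) (x : T) : Prop :=
  match w with
  | [::] => True
  | a :: w' => plusZ (piece a) x /\ follows w' (F x)
  end.

Definition brk (w : seq 'I_k) : set T :=
  (iter (size w).-1 F @` [set x | follows w x]) `&` Xset.

(* A_0..A_n ~ B_0..B_m, written with the common suffix A_{n-k}..A_n = a :: s *)
Definition pequiv (w1 w2 : seq 'I_k) : Prop :=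
  exists (u1 u2 : seq 'I_k) (a : 'I_k) (s : seq 'I_k),
    [/\ w1 = u1 ++ a :: s, w2 = u2 ++ a :: s,
        brk (rcons u1 a) = piece a & brk (rcons u2 a) = piece a].

Definition vtx := set (seq 'I_k).

Definition cls (w : seq 'I_k) : vtx := [set w' | pequiv w w'].

Definition is_vertex (al : vtx) : Prop :=
  exists w, [/\ w <> [::], brk w !=set0 & al = cls w].

Definition arrow (al be : vtx) : Prop :=
  [/\ is_vertex al, is_vertex be &
      exists w a, al = cls w /\ be = cls (rcons w a)].

(* the significant part of w is drop i w, of length h.+1 *)
Definition sig_height (w : seq 'I_k) (hh : nat) : Prop :=
  exists i : nat, [/\ (i + hh).+1 = size w, pequiv w (drop i w) &
     forall j, (i < j < size w)%N -> ~ pequiv w (drop j w)].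

(* height H(al) (well defined by the paper: independent of the representative) *)
Definition H (al : vtx) : nat :=
  xget 0%N [set hh | exists w, al = cls w /\ sig_height w hh].

Definition path_in (C : set vtx) (u v : vtx) : Prop :=
  exists (L : nat) (f : nat -> vtx),
    [/\ (0 < L)%N, f 0%N = u, f L = v,
        (forall i, (i < L)%N -> arrow (f i) (f i.+1))
      & forall i, (i <= L)%N -> C (f i)].

Definition strongly_connected (C : set vtx) : Prop :=
  C `<=` is_vertex /\ forall u v, C u -> C v -> path_in C u v.

Definition component (C : set vtx) : Prop :=
  [/\ C !=set0, strongly_connected C &
      forall D, C `<=` D -> strongly_connected D -> D = C].

Definition infinite_path (al : nat -> vtx) : Prop :=
  forall p, arrow (al p) (al p.+1).

Definition Ipath (be : nat -> vtx) : Prop :=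
  [/\ infinite_path be, H (be 0%N) = 0%N & forall p, (0 < p)%N -> (0 < H (be p))%N].

End LiftedGraph.

(* Heights grow by one along every arrow of the covering graph, except for
   arrows ending in the basis, where the height is 0.  Hence every cycle, and
   so every connected component, meets the basis, and two components sharing
   a vertex coincide; this gives (i).

   The geometric input concerns a word [u b] with nonempty bracket: [<u b>]
   is the image, under the parametrisation of the branch [X^(br b)], of an
   interval starting at [lo b], and the points of [F<u b> + Z] on the branch
   [X^(ell b)] form an initial segment of it, because the connected set
   [F<u b>] can leave that branch only into the interior of [T_R].  As the
   pieces of the partition are disjoint, at most one successor [A] has
   [<u b A>] nonempty and different from [A]: at most one arrow leaving a
   vertex keeps the height positive.  So a path of [I] is determined by its
   first vertex (ii).  A path whose heights are eventually positive is the
   tail of the path of [I] formed by the prefixes of a significant part;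
   otherwise some basis vertex recurs infinitely often and the path ends in
   its component (iii). *)

From Pilot Require Import Defs.
From HB Require Import structures.
From mathcomp Require Import all_boot all_order all_algebra.
From mathcomp Require Import all_classical all_reals all_analysis.
From mathcomp Require Import Rstruct Rstruct_topology.
From mathcomp Require Import zify lra.

Set Implicit Arguments.
Unset Strict Implicit.
Unset Printing Implicit Defensive.

Import Order.TTheory GRing.Theory Num.Theory.
Local Open Scope classical_set_scope.
Local Open Scope ring_scope.

Lemma continuous_image_closure (T U : topologicalType) (f : T -> U) (A : set T) :
  continuous f -> f @` closure A `<=` closure (f @` A).
Proof.
move=> cf _ [x Ax <-].
have cl : closed (f @^-1` closure (f @` A)).
  by apply: preimage_closed => [y _|]; [exact: cf|exact: closed_closure].
suff : closure A `<=` f @^-1` closure (f @` A) by apply.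
rewrite [X in _ `<=` X](closure_id _).1 //; apply: closureS => y Ay.
by apply: subset_closure; exists y.
Qed.

Lemma continuous_iter (T : topologicalType) (f : T -> T) p :
  continuous f -> continuous (iter p f).
Proof.
move=> cf; elim: p => [|p IH] x; first exact: cvg_id.
exact: (continuous_comp (IH x) (cf (iter p f x))).
Qed.

Lemma is_interval_cc (a b : RR) : is_interval [set t | a <= t <= b].
Proof. by move=> x y /andP[? ?] /andP[? ?] z /andP[? ?]; apply/andP; split; lra. Qed.

Lemma is_interval_oc (a b : RR) : is_interval [set t | a < t <= b].
Proof. by move=> x y /andP[? ?] /andP[? ?] z /andP[? ?]; apply/andP; split; lra. Qed.

Lemma List_In_mem (A : eqType) (x : A) (s : seq A) : x \in s -> List.In x s.
Proof.
elim: s => [//|y s IH]; rewrite in_cons => /orP[/eqP ->|xs]; [by left|by right; apply: IH].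
Qed.

Lemma bounded_by_keys (I : finType) (A : Type) (x0 : A) (P : A -> Prop)
    (key : I -> A -> Prop) :
  (forall x, P x -> exists i, key i x) ->
  (forall i x y, P x -> P y -> key i x -> key i y -> x = y) ->
  exists s : seq A, (size s <= #|I|)%N /\ forall x, P x -> List.In x s.
Proof.
move=> keyP key_inj.
have pick i : exists y, (exists x, P x /\ key i x) -> P y /\ key i y.
  by case: (pselect (exists x, P x /\ key i x)) => [[x Px]|nx]; [exists x|exists x0 => /nx].
have [f fP] := choice pick.
exists (map f (enum I)); split; first by rewrite size_map cardE.
move=> x Px; have [i kx] := keyP x Px.
have [Pfi kfi] := fP i (ex_intro _ x (conj Px kx)).
rewrite (key_inj i x (f i)) //; apply: List.in_map; apply: List_In_mem; exact: mem_enum.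
Qed.

Lemma unit_seg0 : unit_seg 0. Proof. by rewrite /unit_seg /= lexx ler01. Qed.
Lemma unit_seg1 : unit_seg 1. Proof. by rewrite /unit_seg /= lexx ler01. Qed.

Section Arc.
Variables (T : topologicalType) (g : RR -> T).
Hypothesis garc : Defs.arc g.

Lemma arc_inj s t : unit_seg s -> unit_seg t -> g s = g t -> s = t.
Proof. by case: garc => _ + _; apply. Qed.

Lemma arc_open_trace (U : set RR) : open U ->
  exists V : set T, open V /\ forall u, unit_seg u -> V (g u) <-> U u.
Proof.
case: garc => _ _ /(_ U) gopen /gopen [V [oV eV]]; exists V; split => // u uu.
split => [Vu|Uu].
  have : (V `&` g @` unit_seg) (g u) by split => //; exists u.
  by rewrite -eV => -[r [Ur ur] /(arc_inj ur uu) <-].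
have : (g @` (U `&` unit_seg)) (g u) by exists u.
by rewrite eV => -[].
Qed.

(* A parameter [s] with [g s] missing from [K] would cut [K] into two
   relatively clopen pieces: the points beyond [s], and those before [s]
   together with [K `&` O]. *)
Lemma arc_connected_initial (K O Z : set T) :
  connected K -> open O -> closed Z -> O `<=` Z ->
  (forall u, 0 < u <= 1 -> ~ Z (g u)) ->
  K `<=` g @` unit_seg `|` O -> K (g 0) ->
  forall s t, 0 <= s -> s <= t -> t <= 1 -> K (g t) -> K (g s).
Proof.
move=> Kc oO cZ OZ nZg Kcov Kg0 s t s0 st t1 Kgt.
have [->//|sn0] := eqVneq s 0; have [->//|snt] := eqVneq s t.
apply: contrapT => nKs.
have slt : s < t by rewrite lt_neqAle snt st.
have ut : unit_seg t by apply/andP; split; lra.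
have [V [oV eV]] := arc_open_trace (open_gt (y := s)).
have [W [oW eW]] := arc_open_trace (open_lt (y := s)).
have eB : K `&` (V `&` ~` Z) = K `&` ~` (W `|` O).
  apply/seteqP; split => x [Kx Cx]; split => //.
    move: Cx => [Vx nZx] [Wx|/OZ//]; case: (Kcov x Kx) => [[u uu ex]|/OZ//].
    by move: Vx Wx; rewrite -ex (eV _ uu) (eW _ uu) /=; lra.
  case: (Kcov x Kx) => [[u uu ex]|Ox]; last by case: Cx; right.
  rewrite -ex in Kx Cx *; have [us'|su|eus] := ltgtP u s.
  - by case: Cx; left; rewrite (eW _ uu).
  - split; first by rewrite (eV _ uu).
    by apply: nZg; move: uu => /andP[_ u1]; apply/andP; split => //; lra.
  - by case: nKs; rewrite -eus.
have B0 : (K `&` (V `&` ~` Z)) !=set0.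
  exists (g t); split => //; split; first by rewrite (eV _ ut).
  by apply: nZg; apply/andP; split; lra.
have eK := Kc _ B0 (ex_intro2 _ _ _ (openI oV (closed_openC cZ)) erefl)
  (ex_intro2 _ _ _ (open_closedC (openU oW oO)) eB).
have : (K `&` (V `&` ~` Z)) (g 0) by rewrite eK.
by move=> [_ [/(eV 0 unit_seg0)]] /=; lra.
Qed.

End Arc.

Lemma unit_co_shift_eq0 (R : realDomainType) (m : int) (a b : R) :
  0 <= a < 1 -> 0 <= b < 1 -> b = a + m%:~R -> m = 0.
Proof.
move=> /andP[? ?] /andP[? ?] e.
have : (m < 1)%R by rewrite -(ltr_int R); lra.
have : (-1 < m)%R by rewrite -(ltr_int R); lra.
lia.
Qed.

Section LiftedGraph.
Variables (T : topologicalType) (h : RR -> T) (tau tau' F : T -> T).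
Hypotheses (tauK : cancel tau tau') (tau'K : cancel tau' tau)
  (ct : continuous tau) (ct' : continuous tau')
  (htau : forall x, tau (h x) = h (x + 1))
  (hinj : injective h)
  (hcc : forall x, ~ range h x ->
     exists t0, closure (cc h x) `&` range h = [set h t0])
  (Fc : continuous F) (F_tau : degree_one tau F).
Variables (n : nat) (gam : 'I_n -> RR -> T).
Variables (k : nat) (br : 'I_k -> 'I_n) (lo hi : 'I_k -> RR).
Variables (ell : 'I_k -> 'I_n) (per : 'I_k -> int).
Hypotheses (SL : sun_like h F gam)
  (BP : basic_partition h tau tau' F gam br lo hi ell per).
Local Notation sh := (Defs.shift tau tau').
Local Notation pZ := (plusZ tau tau').
Local Notation TRs := (TR h F).
Local Notation X := (Xset h F).
Local Notation pc := (piece gam br lo hi).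
Local Notation fol := (follows tau tau' F gam br lo hi).
Local Notation brk := (brk h tau tau' F gam br lo hi).
Local Notation peq := (pequiv h tau tau' F gam br lo hi).
Local Notation cls := (cls h tau tau' F gam br lo hi).
Local Notation sigh := (sig_height h tau tau' F gam br lo hi).
Local Notation H := (Defs.H h tau tau' F gam br lo hi).
Local Notation isv := (is_vertex h tau tau' F gam br lo hi).
Local Notation arr := (arrow h tau tau' F gam br lo hi).
Local Notation pin := (path_in h tau tau' F gam br lo hi).
Local Notation comp := (component h tau tau' F gam br lo hi).
Local Notation scon := (strongly_connected h tau tau' F gam br lo hi).
Local Notation infp := (infinite_path h tau tau' F gam br lo hi).
Local Notation Ip := (Ipath h tau tau' F gam br lo hi).

(** * The action of Z *)

Lemma tau_shift m x : tau (sh m x) = sh (m + 1) x.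
Proof.
case: m => [p|[|q]].
- by have -> : (Posz p + 1 = Posz p.+1)%R by lia.
- by rewrite /= tau'K.
- have -> : (Negz q.+1 + 1 = Negz q)%R by rewrite !NegzE; lia.
  by rewrite /= tau'K.
Qed.

Lemma tau'_shift m x : tau' (sh m x) = sh (m - 1) x.
Proof.
case: m => [[|q]|p].
- by [].
- have -> : (Posz q.+1 - 1 = Posz q)%R by lia.
  by rewrite /= tauK.
- by have -> : (Negz p - 1 = Negz p.+1)%R by rewrite !NegzE; lia.
Qed.

Lemma shiftD m m' x : sh m (sh m' x) = sh (m + m') x.
Proof.
case: m => [p|p] /=.
  elim: p => [|p IH]; first by rewrite add0r.
  by rewrite iterS IH tau_shift; congr sh; lia.
elim: p => [|p IH]; first by rewrite /= tau'_shift; congr sh; rewrite NegzE; lia.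
by rewrite iterS IH tau'_shift; congr sh; rewrite !NegzE; lia.
Qed.

Lemma shiftK m : cancel (sh m) (sh (- m)).
Proof. by move=> x; rewrite shiftD addNr. Qed.

Lemma shiftNK m : cancel (sh (- m)) (sh m).
Proof. by move=> x; rewrite shiftD addrN. Qed.

Lemma shift_commute (G : T -> T) : (forall x, G (tau x) = tau (G x)) ->
  forall m x, G (sh m x) = sh m (G x).
Proof.
move=> Gtau.
have Gtau' x : G (tau' x) = tau' (G x) by rewrite -{2}(tau'K x) Gtau tauK.
case=> [p|p] x /=; first by elim: p => [|p IH] //=; rewrite Gtau IH.
by elim: p => [|p IH] /=; rewrite Gtau' // IH.
Qed.

Lemma shift_continuous m : continuous (sh m).
Proof. by case: m => [p|p]; apply: continuous_iter. Qed.

Lemma plusZ_self (A : set T) z : A z -> pZ A z.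
Proof. by exists 0, z. Qed.

Lemma plusZ_shift (A : set T) m z : pZ A z -> pZ A (sh m z).
Proof. by move=> [m' [y [Ay ->]]]; exists (m + m'), y; rewrite shiftD. Qed.

Lemma shift_h m u : sh m (h u) = h (u + m%:~R).
Proof.
have tau'_h x : tau' (h x) = h (x - 1) by rewrite -[in LHS](subrK 1 x) -htau tauK.
case: m => [p|p].
  elim: p u => [|p IH] u; first by rewrite addr0.
  have -> : Posz p.+1 = (Posz p + 1)%R by lia.
  by rewrite -tau_shift // IH htau intrD addrA.
have -> : Negz p = (- Posz p.+1)%R by rewrite NegzE.
elim: p.+1 u => [|q IH] u; first by rewrite /= addr0.
have -> : (- Posz q.+1 = - Posz q - 1)%R by lia.
by rewrite -tau'_shift // IH tau'_h !intrD !mulrNz addrA.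
Qed.

Lemma shift_not_range m x : ~ range h x -> ~ range h (sh m x).
Proof.
move=> nx [u _ e]; apply: nx; exists (u + (- m)%:~R) => //.
by rewrite -shift_h e shiftK.
Qed.

Lemma closure_cc_shift m x t : ~ range h x -> closure (cc h x) (h t) ->
  closure (cc h (sh m x)) (h (t + m%:~R)).
Proof.
move=> nx cl.
have shift_cc : sh m @` cc h x `<=` cc h (sh m x).
  apply: connected_component_max.
  - by exists x => //; apply: connected_component_refl.
  - by move=> _ [y /connected_component_sub cy <-]; apply: shift_not_range.
  - apply: connected_continuous_connected; first exact: component_connected.
    by apply: continuous_subspaceT; exact: shift_continuous.
apply: (closureS shift_cc); apply: continuous_image_closure.
  exact: shift_continuous.
by exists (h t) => //; rewrite shift_h.
Qed.

Lemma rRpre_unit_co_shift m z :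
  rRpre h unit_co z -> rRpre h unit_co (sh m z) -> m = 0.
Proof.
case=> [[u [u01 ->]]|[nz [t [t01 clt]]]].
  rewrite shift_h; case=> [[u' [u'01 /hinj e]]|[nr _]].
    by apply: (unit_co_shift_eq0 u01 u'01); rewrite e.
  by case: nr; exists (u + m%:~R).
case=> [[u' [_ e]]|[_ [t' [t'01 clt']]]].
  by case: (@shift_not_range m z nz); exists u'.
have [t0 e0] := hcc (@shift_not_range m z nz).
have c1 : (closure (cc h (sh m z)) `&` range h) (h t') by split => //; exists t'.
have c2 : (closure (cc h (sh m z)) `&` range h) (h (t + m%:~R)).
  by split; [exact: closure_cc_shift|exists (t + m%:~R)].
rewrite e0 in c1 c2.
by apply: (unit_co_shift_eq0 t01 t'01); apply: hinj; rewrite c1 c2.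
Qed.

Lemma iter_shift p m x : iter p F (sh m x) = sh m (iter p F x).
Proof.
apply: shift_commute => // y.
by elim: p => [|p IH] //=; rewrite IH F_tau.
Qed.

Lemma F_shift m x : F (sh m x) = sh m (F x).
Proof. exact: (iter_shift 1). Qed.

Lemma TR_range u : TRs (h u).
Proof. by apply: subset_closure; exists 0%N => //; exists (h u) => //; exists u. Qed.

Lemma TR_shift m x : TRs x -> TRs (sh m x).
Proof.
move=> TRx.
have orbit_shift : sh m @` (\bigcup_(p in [set: nat]) (iter p F @` range h)) `<=`
           \bigcup_(p in [set: nat]) (iter p F @` range h).
  move=> _ [y [p _ [z [u _ <-] <-]] <-].
  exists p => //; exists (h (u + m%:~R)); first by exists (u + m%:~R).
  by rewrite -iter_shift shift_h.
apply: (closureS orbit_shift); apply: continuous_image_closure.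
  exact: shift_continuous.
by exists x.
Qed.

Lemma closure_nTR_shift m x : closure (~` TRs) x -> closure (~` TRs) (sh m x).
Proof.
move=> cl.
have nTR_shift : sh m @` (~` TRs) `<=` ~` TRs.
  by move=> _ [y nTRy <-] /(TR_shift (m := - m)); rewrite shiftK.
apply: (closureS nTR_shift); apply: continuous_image_closure.
  exact: shift_continuous.
by exists x.
Qed.

Lemma interior_TR_shift m x : interior TRs x -> interior TRs (sh m x).
Proof.
rewrite -[interior _]setCK -closure_setC => nx /(closure_nTR_shift (m := - m)).
by rewrite shiftK.
Qed.

(** * Branches and pieces *)

Lemma branch_open_part i t :
  0 < t <= 1 -> ~ TRs (gam i t) /\ rRpre h unit_co (gam i t).
Proof.
move=> t01; case: SL => _ SLeq _ _ _.
suff : (\bigcup_(i in [set: 'I_n]) (gam i @` [set t | 0 < t <= 1])) (gam i t).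
  by rewrite -SLeq; case.
by exists i => //; exists t.
Qed.

Lemma branch_not_range i t : 0 < t <= 1 -> ~ range h (gam i t).
Proof.
move=> /(branch_open_part i) [nTR _] [u _ e]; apply: nTR.
by rewrite -e; apply: TR_range.
Qed.

Lemma connected_branch i (A : set RR) : A `<=` unit_seg -> is_interval A ->
  connected (gam i @` A).
Proof.
move=> Aunit Aitv; case: SL => garc _ _ _ _; have [gc _ _] := garc i.
apply: connected_continuous_connected; first exact/connected_intervalP.
exact: continuous_subspaceW gc.
Qed.

Lemma branch0_closure i : closure (gam i @` [set t | 0 < t <= 1]) (gam i 0).
Proof. by case: SL => _ _ -> _ _; exists 0 => //; exact: unit_seg0. Qed.

(* Either [gam i 0] is the point where the component of [T \ R] containing
   the branch is attached to the real line, or it lies in that component. *)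
Lemma branch0_rRpre i : rRpre h unit_co (gam i 0).
Proof.
have g1 : (0 : RR) < (1 : RR) <= 1 by apply/andP; split; lra.
have n1 := branch_not_range (i := i) g1.
have [_ [[t [_ e]]|[_ [t1 [t101 cl1]]]]] := branch_open_part i g1.
  by case: n1; exists t.
have oc_cc : gam i @` [set t | 0 < t <= 1] `<=` cc h (gam i 1).
  apply: connected_component_max; first by exists 1.
  - by move=> _ [t t01 <-]; apply: branch_not_range.
  - apply: connected_branch; last exact: is_interval_oc.
    by move=> t /andP[ta tb]; rewrite /unit_seg /= tb ltW.
have [[t _ e]|nr0] := pselect (range h (gam i 0)).
  have [t0 e0] := hcc n1.
  have c1 : (closure (cc h (gam i 1)) `&` range h) (h t1) by split => //; exists t1.
  have c2 : (closure (cc h (gam i 1)) `&` range h) (gam i 0).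
    by split; [apply: (closureS oc_cc); exact: branch0_closure|exists t].
  rewrite e0 /= in c1 c2.
  by left; exists t1; split => //; rewrite c2 c1.
have cc_gam0 : cc h (gam i 1) (gam i 0).
  have : gam i @` unit_seg `<=` cc h (gam i 1).
    apply: connected_component_max; first by exists 1 => //; exact: unit_seg1.
    - move=> _ [t /andP[ta tb] <-]; have [->//|tn0] := eqVneq t 0.
      by apply: branch_not_range; rewrite tb andbT lt_neqAle eq_sym tn0.
    - by apply: connected_branch => //; exact: is_interval_cc.
  by apply; exists 0 => //; exact: unit_seg0.
right; split => //; exists t1; split => //.
by rewrite /cc -(same_connected_component cc_gam0).
Qed.

Lemma branch_sub_X i : Xb gam i `<=` X.
Proof.
move=> _ [t /andP[t0 t1] <-]; have [->|tn0] := eqVneq t 0.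
  split; last exact: branch0_rRpre.
  apply: closureS (@branch0_closure i) => _ [s s01 <-].
  by have [] := branch_open_part i s01.
have t01 : 0 < t <= 1 by rewrite t1 andbT lt_neqAle eq_sym tn0.
by have [? ?] := branch_open_part i t01; split => //; exact: subset_closure.
Qed.

Lemma X_shift m z : X z -> X (sh m z) -> m = 0.
Proof. by move=> [_ rz] [_ rmz]; exact: rRpre_unit_co_shift rz rmz. Qed.

Lemma plusZ_X (A : set T) z : A `<=` X -> pZ A z -> X z -> A z.
Proof. by move=> AX [m [y [Ay ->]]] /(X_shift (AX _ Ay)) ->. Qed.

Lemma piece_param j t : lo j <= t <= hi j -> unit_seg t.
Proof.
case: BP => BPlo _ _ _ _; have [? [? ?]] := BPlo j.
by move=> /andP[? ?]; rewrite /unit_seg /=; apply/andP; split; lra.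
Qed.

Lemma lo_ge0 j : 0 <= lo j.
Proof. by case: BP => BPlo _ _ _ _; have [] := BPlo j. Qed.

Lemma lo_le_hi j : lo j <= hi j.
Proof. by case: BP => BPlo _ _ _ _; have [_ []] := BPlo j. Qed.

Lemma piece_sub_branch j : pc j `<=` Xb gam (br j).
Proof. by move=> _ [t tj <-]; exists t => //; exact: piece_param tj. Qed.

Lemma piece_sub_X j : pc j `<=` X.
Proof. by move=> z /piece_sub_branch; apply: branch_sub_X. Qed.

(** * Brackets, classes of words and heights *)

Lemma follows_shift w m x : fol w x -> fol w (sh m x).
Proof.
elim: w x => [|a w IH] x //= [pa fw]; split; first exact: plusZ_shift.
by rewrite F_shift; apply: IH.
Qed.

Lemma follows_rcons w a x :
  fol (rcons w a) x <-> fol w x /\ pZ (pc a) (iter (size w) F x).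
Proof.
elim: w x => [|b w IH] x /=; first by split; [case|case].
by rewrite IH -iterS iterSr; split => [[? [? ?]]|[[? ?] ?]].
Qed.

Lemma brk_single a : brk [:: a] = pc a.
Proof.
apply/seteqP; split => [z [[x [pa _] /= <-] Xx]|z pz].
  exact: plusZ_X (@piece_sub_X a) pa Xx.
split; last exact: piece_sub_X pz.
by exists z => //; split => //; apply: plusZ_self.
Qed.

Lemma brk_rcons w a : w <> [::] -> brk (rcons w a) = pZ (F @` brk w) `&` pc a.
Proof.
case/lastP: w => [//|u b] _; rewrite /Defs.brk !size_rcons /=.
apply/seteqP; split.
  move=> z [[x /follows_rcons [fw pa] <-] Xz]; rewrite size_rcons in pa.
  split; first last.
    exact: plusZ_X (@piece_sub_X a) pa Xz.
  move: fw => /[dup] fw /follows_rcons [fu [m' [q [pq e]]]].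
  exists m', (F q); split; last by rewrite iterS e F_shift.
  exists q => //; split; last exact: piece_sub_X pq.
  exists (sh (- m') x); first exact: follows_shift.
  by rewrite iter_shift e shiftK.
move=> z [[m [y [[q [[x fw <-] _] <-] ->]]] pz].
split; last exact: piece_sub_X pz.
exists (sh m x); last by rewrite iter_shift iterS.
apply/follows_rcons; split; first exact: follows_shift.
by rewrite iter_shift size_rcons iterS; apply: plusZ_self.
Qed.

Lemma rcons_neq_nil (u : seq 'I_k) a : rcons u a <> [::].
Proof. by case: u. Qed.

Lemma brk_cat u v w : u <> [::] -> v <> [::] -> brk u = brk v ->
  brk (u ++ w) = brk (v ++ w).
Proof.
move=> un vn e; elim/last_ind: w => [|w a IH]; first by rewrite !cats0.
by rewrite -!rcons_cat !brk_rcons ?IH //; case: (u) un; case: (v) vn.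
Qed.

Lemma pequiv_refl w : w <> [::] -> peq w w.
Proof.
by case: w => [//|a s] _; exists [::], [::], a, s; split => //; rewrite brk_single.
Qed.

Lemma pequiv_sym w1 w2 : peq w1 w2 -> peq w2 w1.
Proof. by move=> [u1 [u2 [a [s [e1 e2 b1 b2]]]]]; exists u2, u1, a, s. Qed.

Lemma pequiv_neq_nil w1 w2 : peq w1 w2 -> w1 <> [::].
Proof. by move=> [u1 [u2 [a [s [-> _ _ _]]]]]; case: u1. Qed.

Lemma pequiv_brk w1 w2 : peq w1 w2 -> brk w1 = brk w2.
Proof.
move=> [u1 [u2 [a [s [-> -> b1 b2]]]]]; rewrite -!cat_rcons.
by apply: brk_cat; rewrite ?b1 ?b2 //; apply: rcons_neq_nil.
Qed.

Lemma pequiv_rcons w1 w2 a : peq w1 w2 -> peq (rcons w1 a) (rcons w2 a).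
Proof.
move=> [u1 [u2 [b [s [-> -> b1 b2]]]]].
by exists u1, u2, b, (rcons s a); rewrite !rcons_cat.
Qed.

(* The decomposition of [w2] with the shorter prefix [u2'] can be moved
   to the longer one, since equal brackets stay equal under extension. *)
Lemma pequiv_trans_le w1 w2 w3 u1 u2 a s u2' u3 b t :
  w1 = u1 ++ a :: s -> w2 = u2 ++ a :: s -> brk (rcons u1 a) = pc a ->
  brk (rcons u2 a) = pc a -> w2 = u2' ++ b :: t -> w3 = u3 ++ b :: t ->
  brk (rcons u2' b) = pc b -> brk (rcons u3 b) = pc b ->
  (size u2' <= size u2)%N -> peq w1 w3.
Proof.
move=> e1 e2 b1 b2 e2' e3 b2' b3 sz.
set c := drop (size u2') u2.
have e22 := etrans (esym e2) e2'.
have eu2 : u2 = u2' ++ c.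
  rewrite -[LHS](cat_take_drop (size u2')); congr (_ ++ _).
  by have := congr1 (take (size u2')) e22; rewrite takel_cat // take_size_cat.
have ec : c ++ a :: s = b :: t.
  by have := congr1 (drop (size u2')) e22; rewrite {1}eu2 -catA !drop_size_cat.
exists u1, (u3 ++ c), a, s; split => //; first by rewrite e3 -ec catA.
case: c ec eu2 => [[-> _ _]|b' c' [ebb _] eu2]; first by rewrite cats0.
rewrite -ebb in b3 b2'.
rewrite rcons_cat rcons_cons -cat_rcons.
rewrite (@brk_cat (rcons u3 b') (rcons u2' b') (rcons c' a)) ?b3 ?b2' //;
  try exact: rcons_neq_nil.
by rewrite cat_rcons -rcons_cons -rcons_cat -eu2.
Qed.

Lemma pequiv_trans w1 w2 w3 : peq w1 w2 -> peq w2 w3 -> peq w1 w3.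
Proof.
move=> [u1 [u2 [a [s [e1 e2 b1 b2]]]]] [u2' [u3 [b [t [e2' e3 b2' b3]]]]].
have [sz|sz] := leqP (size u2') (size u2).
  exact: pequiv_trans_le e1 e2 b1 b2 e2' e3 b2' b3 sz.
apply: pequiv_sym; exact: pequiv_trans_le e3 e2' b3 b2' e2 e1 b2 b1 (ltnW sz).
Qed.

Lemma cls_nil : cls [::] = set0.
Proof. by apply/seteqP; split => // w /pequiv_neq_nil. Qed.

Lemma cls_eq w1 w2 : peq w1 w2 -> cls w1 = cls w2.
Proof.
move=> e; apply/seteqP; split => w /= p.
  exact: pequiv_trans (pequiv_sym e) p.
exact: pequiv_trans e p.
Qed.

Lemma cls_pequiv w1 w2 : w1 <> [::] -> cls w1 = cls w2 -> peq w2 w1.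
Proof. by move=> n1 e; suff : cls w2 w1 by []; rewrite -e; apply: pequiv_refl. Qed.

Lemma sig_height_exists w : w <> [::] -> exists hh, sigh w hh.
Proof.
move=> wn.
pose P i := (i < size w)%N && `[< peq w (drop i w) >].
have exP : exists i, P i.
  exists 0%N; apply/andP; split; first by case: (w) wn.
  by apply/asboolP; rewrite drop0; apply: pequiv_refl.
have ubP i : P i -> (i <= size w)%N by move=> /andP[/ltnW].
have [i /andP[ilt /asboolP pi] maxi] := ex_maxnP exP ubP.
exists (size w - i - 1)%N, i; split => //; first lia.
move=> j /andP[ij jw] pj.
have /maxi : P j by apply/andP; split => //; apply/asboolP.
lia.
Qed.

Lemma sig_height_neq_nil w hh : sigh w hh -> w <> [::].
Proof. by move=> [i [e _ _]] ew; rewrite ew in e. Qed.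

Lemma sig_height_start w hh u a s : sigh w hh -> w = u ++ a :: s ->
  brk (rcons u a) = pc a -> exists i, [/\ (i + hh).+1 = size w,
    peq w (drop i w), (forall j, (i < j < size w)%N -> ~ peq w (drop j w))
    & (size u <= i)%N].
Proof.
move=> [i [e1 e2 e3]] ew bu; exists i; split => //.
rewrite leqNgt; apply/negP => lt.
apply: (e3 (size u)); first by rewrite lt ew size_cat /=; lia.
rewrite ew drop_size_cat //; exists u, [::], a, s; split => //.
by rewrite brk_single.
Qed.

Lemma sig_height_pequiv_leq w w' hh hh' : peq w w' -> sigh w hh -> sigh w' hh' ->
  (hh' <= hh)%N.
Proof.
move=> p sw sw'; rewrite leqNgt; apply/negP => lt.
have [u1 [u2 [a [s [e1 e2 b1 b2]]]]] := p.
have [i [si pi mi ui]] := sig_height_start sw e1 b1.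
have [i' [si' pi' mi' ui']] := sig_height_start sw' e2 b2.
set L := size (a :: s).
have sw1 : size w = (size u1 + L)%N by rewrite e1 size_cat.
have sw2 : size w' = (size u2 + L)%N by rewrite e2 size_cat.
pose j := (size u2 + (L - hh.+1))%N.
have dj : drop j w' = drop i w.
  rewrite e2 e1 /j drop_cat ltnNge leq_addr /= addKn.
  rewrite drop_cat ltnNge ui /=; congr drop; lia.
apply: (mi' j); first by apply/andP; split; lia.
by rewrite dj; exact: pequiv_trans (pequiv_sym p) pi.
Qed.

Lemma sig_height_unique w w' hh hh' :
  peq w w' -> sigh w hh -> sigh w' hh' -> hh = hh'.
Proof.
move=> p s s'; apply/eqP; rewrite eqn_leq.
by rewrite (sig_height_pequiv_leq p s s') (sig_height_pequiv_leq (pequiv_sym p) s' s).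
Qed.

Lemma H_cls w hh : sigh w hh -> H (cls w) = hh.
Proof.
move=> s; rewrite /Defs.H.
have ex : exists hh0, [set hh | exists w', cls w = cls w' /\ sigh w' hh] hh0.
  by exists hh, w.
have [w' [e s']] := xgetPex 0%N ex.
exact: sig_height_unique (cls_pequiv (sig_height_neq_nil s) e) s' s.
Qed.

Lemma H_single a : H (cls [:: a]) = 0%N.
Proof.
apply: H_cls; exists 0%N; split => //; first exact: pequiv_refl.
by move=> j /andP[j0 j1]; exfalso; simpl in j1; lia.
Qed.

Lemma sig_height_rcons w a hh : sigh w hh ->
  exists hh', sigh (rcons w a) hh' /\ (hh' = hh.+1 \/ peq (rcons w a) [:: a]).
Proof.
move=> sw; have [i [si pi mi]] := sw.
have [hh' sw'] := sig_height_exists (@rcons_neq_nil w a).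
exists hh'; split => //.
have [i' [si' pi' mi']] := sw'.
rewrite size_rcons in si' mi'.
have ii' : (i <= i')%N.
  rewrite leqNgt; apply/negP => lt; apply: (mi' i); first by apply/andP; split; lia.
  by rewrite drop_rcons; [apply: pequiv_rcons|lia].
case: (ltngtP i i') ii' => // [lt _|eq _]; last by left; lia.
right; move: pi' => [u1 [u2 [b [s1 [e1 e2 b1 b2]]]]].
case/lastP: s1 e1 e2 => [|s0 a'] e1 e2.
  rewrite cats1 in e1; case: (rcons_inj e1) => eu eb.
  rewrite -eu -eb in b1.
  by exists w, [::], a, [::]; rewrite cats1 brk_single.
exfalso.
rewrite -rcons_cons -rcons_cat in e1; case: (rcons_inj e1) => ew ea.
have il : (i' <= size w)%N by lia.
rewrite drop_rcons // -rcons_cons -rcons_cat in e2; case: (rcons_inj e2) => ed _.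
have il2 : (i' < size w)%N.
  by have := congr1 size ed; rewrite size_drop size_cat /=; lia.
apply: (mi i'); first by apply/andP; split.
by rewrite ed ew; exists u1, u2, b, s0.
Qed.

Lemma vertex_cls al w : isv al -> al = cls w -> w <> [::] /\ brk w !=set0.
Proof.
move=> [w0 [n0 b0 e0]] e.
have ew : cls w0 = cls w by rewrite -e0 -e.
have nw : w <> [::].
  move=> wn; suff : cls w0 w0 by rewrite ew wn cls_nil.
  exact: pequiv_refl.
by split => //; rewrite (pequiv_brk (cls_pequiv n0 ew)).
Qed.

Lemma H_arrow al be : arr al be -> H be = 0%N \/ H be = (H al).+1.
Proof.
move=> [va vb [w [a [ea eb]]]].
have [nw _] := vertex_cls va ea.
have [hh sw] := sig_height_exists nw.
have [hh' [sw' [e|p]]] := sig_height_rcons a sw.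
  by right; rewrite ea eb (H_cls sw) (H_cls sw') e.
by left; rewrite eb (cls_eq p) H_single.
Qed.

Lemma H0_basis al : isv al -> H al = 0%N -> exists a, al = cls [:: a].
Proof.
move=> [w [nw _ e]] h0.
have [hh sw] := sig_height_exists nw.
have := H_cls sw; rewrite -e h0 => e0; rewrite -e0 in sw.
have [i [si pi _]] := sw.
have : size (drop i w) = 1%N by rewrite size_drop; lia.
case E: (drop i w) => [|x [|y z]] // _.
by exists x; rewrite e (cls_eq pi) E.
Qed.

(** * Successors of a vertex *)

Lemma branch_arc i : Defs.arc (gam i).
Proof. by case: SL. Qed.

Lemma piece_branch_param a i t : unit_seg t -> pc a (gam i t) ->
  br a = i /\ lo a <= t <= hi a.
Proof.
move=> ut [t' lt' e].
have ebr : br a = i.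
  have [//|ne] := eqVneq (br a) i; case: SL => _ _ _ /(_ _ _ ne) disj _.
  have : (Xb gam (br a) `&` Xb gam i) (gam i t).
    by split; [exists t'; first exact: piece_param lt'|exists t].
  by rewrite disj.
by split => //; rewrite ebr in e; rewrite -(arc_inj (branch_arc i) (piece_param lt') ut e).
Qed.

Lemma F_piece_cases b y : (F @` pc b) y ->
  (exists2 u, unit_seg u & y = sh (per b) (gam (ell b) u)) \/ interior TRs y.
Proof.
case: BP => _ _ BPF _ _ /(BPF b) [[_ [u uu <-] <-]|]; [by left; exists u|by right].
Qed.

Lemma F_piece_X b m y : (F @` pc b) y -> X (sh m y) ->
  exists2 t, unit_seg t & y = sh (per b) (gam (ell b) t) /\ sh m y = gam (ell b) t.
Proof.
move=> /F_piece_cases [[t ut ey]|iy] Xy.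
  exists t => //; split => //.
  have Xg : X (gam (ell b) t) by apply: (@branch_sub_X (ell b)); exists t.
  by move: Xy; rewrite ey shiftD => Xm; rewrite (X_shift Xg Xm).
have [nI _] := Xy; rewrite closure_setC in nI.
by case: nI; exact: interior_TR_shift.
Qed.

(* [E] is the set of parameters along the branch [X^(ell b)] of the points
   of [F <u b> + Z], an initial segment by [arc_connected_initial]. *)
Lemma brk_rcons_initial u b (I : set RR) :
  brk (rcons u b) = gam (br b) @` I -> I (lo b) ->
  I `<=` [set t | lo b <= t <= hi b] -> is_interval I ->
  exists E : set RR, (forall s t, 0 <= s -> s <= t -> E t -> E s) /\
    forall a, brk (rcons (rcons u b) a) =
      [set z | br a = ell b /\ exists t, [/\ E t, lo a <= t <= hi a & z = gam (ell b) t]].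
Proof.
move=> eb Ilo Isub Iitv.
set K := F @` (gam (br b) @` I).
have KF : K `<=` F @` pc b.
  by move=> _ [_ [t It <-] <-]; exists (gam (br b) t) => //; exists t => //; exact: Isub.
set K' := sh (- per b) @` K.
set O := sh (per b) @^-1` interior TRs.
have K'cov : K' `<=` gam (ell b) @` unit_seg `|` O.
  move=> _ [y Ky <-]; case: (F_piece_cases (KF _ Ky)) => [[t ut ->]|iy].
    by left; exists t => //; rewrite shiftK.
  by right; rewrite /O /= shiftNK.
have K'0 : K' (gam (ell b) 0).
  exists (F (gam (br b) (lo b))); first by exists (gam (br b) (lo b)) => //; exists (lo b).
  by case: BP => _ _ _ -> _; rewrite shiftK.
have K'conn : connected K'.
  apply: connected_continuous_connected; last first.
    by apply: continuous_subspaceT; exact: shift_continuous.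
  apply: connected_continuous_connected; last exact: continuous_subspaceT.
  by apply: connected_branch => // t /Isub; exact: piece_param.
have oO : open O.
  apply: open_comp; last exact: open_interior.
  by move=> x _; exact: shift_continuous.
have OTR : O `<=` TRs.
  move=> x /interior_subset /(TR_shift (m := - per b)); by rewrite shiftK.
have nTR r : 0 < r <= 1 -> ~ TRs (gam (ell b) r) by move=> /(branch_open_part (ell b)) [].
have init := arc_connected_initial (branch_arc (ell b)) K'conn oO (@closed_closure _ _)
  OTR nTR K'cov K'0.
exists [set t | unit_seg t /\ K' (gam (ell b) t)]; split.
  move=> s t s0 st [/andP[_ t1] K't]; split; last exact: init K't.
  by apply/andP; split; lra.
move=> a; rewrite brk_rcons ?eb; last exact: rcons_neq_nil.
apply/seteqP; split => [z [[m [y [Ky ->]]] pz]|z [ebr [t [[ut K't] lt ->]]]].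
  have [t ut [ey em]] := F_piece_X (KF _ Ky) (piece_sub_X pz).
  rewrite em in pz *; have [ebr lt] := piece_branch_param ut pz.
  split => //; exists t; split => //; split => //.
  by exists y => //; rewrite ey shiftK.
split; last by rewrite -ebr; exists t.
by move: K't => [y Ky <-]; exists (- per b), y.
Qed.

Lemma brk_rcons_neq0 w a : w <> [::] -> brk (rcons w a) !=set0 -> brk w !=set0.
Proof. by move=> nw; rewrite brk_rcons // => -[z [[m [y [[x bx _] _]]] _]]; exists x. Qed.

Lemma brk_rcons_interval w b : brk (rcons w b) !=set0 -> exists I : set RR,
  [/\ brk (rcons w b) = gam (br b) @` I, I (lo b),
      I `<=` [set t | lo b <= t <= hi b] & is_interval I].
Proof.
elim/last_ind: w b => [|u c IH] b.
  move=> _; exists [set t | lo b <= t <= hi b]; split => //.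
  - by rewrite /= brk_single.
  - by rewrite /= lexx lo_le_hi.
  - exact: is_interval_cc.
move=> ne; have [I [eb Ilo Isub Iitv]] := IH c (brk_rcons_neq0 (@rcons_neq_nil u c) ne).
have [E [Edown eE]] := brk_rcons_initial eb Ilo Isub Iitv.
move: ne; rewrite eE => -[z0 [ebr [t0 [Et0 /andP[l0 h0] _]]]].
exists [set t | E t /\ lo b <= t <= hi b]; split.
- rewrite ebr; apply/seteqP; split; first by move=> _ [_ [t [Et lt ->]]]; exists t.
  by move=> _ [t [Et lt] <-]; split => //; exists t.
- by split; [apply: (Edown _ t0) => //; exact: lo_ge0|rewrite lexx lo_le_hi].
- by move=> t [].
- move=> x y [Ex /andP[x0 x1]] [Ey /andP[y0 y1]] z /andP[xz zy]; split.
    by apply: (Edown _ y) => //; have := lo_ge0 b; lra.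
  by apply/andP; split; lra.
Qed.

(* Pieces are disjoint, so at most one of them can straddle the end of the
   initial segment [E]. *)
Lemma proper_successor_unique w a a' : w <> [::] ->
  brk (rcons w a) !=set0 -> brk (rcons w a) <> pc a ->
  brk (rcons w a') !=set0 -> brk (rcons w a') <> pc a' -> a = a'.
Proof.
case/lastP: w => [//|u b] _ ne1 np1 ne2 np2.
have [I [eb Ilo Isub Iitv]] := brk_rcons_interval (brk_rcons_neq0 (@rcons_neq_nil _ _) ne1).
have [E [Edown eE]] := brk_rcons_initial eb Ilo Isub Iitv.
have straddle c : brk (rcons (rcons u b) c) !=set0 ->
    brk (rcons (rcons u b) c) <> pc c -> [/\ br c = ell b, E (lo c) & ~ E (hi c)].
  move=> ne np; move: (ne); rewrite eE => -[z [ebr [t0 [Et0 /andP[l0 h0] _]]]].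
  split => //; first by apply: (Edown _ t0) => //; exact: lo_ge0.
  move=> Eh; apply: np; rewrite eE; apply/seteqP; split.
    by move=> _ [_ [t [Et lt ->]]]; exists t => //; rewrite ebr.
  move=> _ [t /[dup] lt /andP[lt1 lt2] <-]; split => //; exists t; split => //.
    by apply: (Edown _ (hi c)) => //; have := lo_ge0 c; lra.
  by rewrite ebr.
have [b1 El1 nEh1] := straddle a ne1 np1.
have [b2 El2 nEh2] := straddle a' ne2 np2.
wlog lc : a a' b1 b2 El1 El2 nEh1 nEh2 {ne1 np1 ne2 np2} / lo a <= lo a'.
  move=> gen; have [l|l] := leP (lo a) (lo a'); first exact: gen.
  by apply/esym/gen => //; exact: ltW.
have lt : lo a' < hi a.
  rewrite ltNge; apply/negP => hl; apply: nEh1; apply: (Edown _ (lo a')) => //.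
  by have := lo_ge0 a; have := lo_le_hi a; lra.
have [//|ne] := eqVneq a a'; case: BP => _ /(_ _ _ ne) disj _ _ _.
have : (pc a `&` pc a') (gam (ell b) (lo a')).
  split; first by exists (lo a'); [apply/andP; split; lra|rewrite b1].
  by exists (lo a'); [rewrite /= lexx lo_le_hi|rewrite b2].
by rewrite disj.
Qed.

(** * The covering graph *)

Lemma path_in_weaken (C D : set (vtx k)) u v : C `<=` D -> pin C u v -> pin D u v.
Proof.
move=> CD [L [f [L0 f0 fL ar inC]]]; exists L, f; split => // i iL.
exact/CD/inC.
Qed.

Lemma path_in_trans C u v w : pin C u v -> pin C v w -> pin C u w.
Proof.
move=> [L1 [f1 [L10 f10 f1L ar1 in1]]] [L2 [f2 [L20 f20 f2L ar2 in2]]].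
pose f i := if (i <= L1)%N then f1 i else f2 (i - L1)%N.
have fL i : (L1 <= i)%N -> f i = f2 (i - L1)%N.
  move=> li; rewrite /f; case: (leqP i L1) => // il.
  have -> : i = L1 by apply/eqP; rewrite eqn_leq il li.
  by rewrite subnn f20 f1L.
have fS i : (i <= L1)%N -> f i = f1 i by move=> il; rewrite /f il.
exists (L1 + L2)%N, f; split.
- by rewrite addn_gt0 L10.
- by rewrite fS.
- by rewrite fL ?leq_addr // addKn.
- move=> i iL; case: (ltnP i L1) => il.
    by rewrite !fS //; [apply: ar1|exact: ltnW].
  by rewrite !fL 1?leqW // subSn //; apply: ar2; lia.
- move=> i iL; case: (leqP i L1) => il; first by rewrite fS //; apply: in1.
  by rewrite fL; [apply: in2; lia|exact: ltnW].
Qed.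

Lemma path_in_arrows (L : nat) (f : nat -> vtx k) :
  (forall i, (i < L)%N -> arr (f i) (f i.+1)) ->
  forall i j, (i < j)%N -> (j <= L)%N -> pin setT (f i) (f j).
Proof.
move=> ar i j ij jL; exists (j - i)%N, (fun m => f (i + m)%N); split => //.
- by rewrite subn_gt0.
- by rewrite addn0.
- by rewrite subnKC // ltnW.
- by move=> m mL; rewrite addnS; apply: ar; lia.
Qed.

Lemma path_in_vertex C u v : pin C u v -> isv v.
Proof.
move=> [L [f [L0 f0 fL ar _]]]; have := ar L.-1.
by rewrite prednK // -fL => /(_ (leqnn L)) [].
Qed.

Lemma component_eq C1 C2 al : comp C1 -> comp C2 -> C1 al -> C2 al -> C1 = C2.
Proof.
move=> [_ [s1 sc1] m1] [_ [s2 sc2] m2] a1 a2.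
have sub1 : C1 `<=` C1 `|` C2 by move=> x; left.
have sub2 : C2 `<=` C1 `|` C2 by move=> x; right.
have sD : scon (C1 `|` C2).
  split; first by move=> x [/s1|/s2].
  have via_al x : (C1 `|` C2) x -> pin (C1 `|` C2) x al /\ pin (C1 `|` C2) al x.
    case=> [x1|x2]; split.
    - exact: path_in_weaken sub1 (sc1 _ _ x1 a1).
    - exact: path_in_weaken sub1 (sc1 _ _ a1 x1).
    - exact: path_in_weaken sub2 (sc2 _ _ x2 a2).
    - exact: path_in_weaken sub2 (sc2 _ _ a2 x2).
  by move=> x y /via_al [xa _] /via_al [_ ay]; exact: path_in_trans xa ay.
exact: etrans (esym (m1 _ sub1 sD)) (m2 _ sub2 sD).
Qed.

Lemma component_H0 C : comp C -> exists al, C al /\ H al = 0%N.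
Proof.
move=> [[u Cu] [_ sc] _]; apply: contrapT => nH.
have [L [f [L0 f0 fL ar inC]]] := sc u u Cu Cu.
have pos i : (i <= L)%N -> (0 < H (f i))%N.
  move=> iL; rewrite lt0n; apply/negP => /eqP e; apply: nH.
  by exists (f i); split => //; apply: inC.
have lin i : (i <= L)%N -> H (f i) = (H u + i)%N.
  elim: i => [|i IH] iL; first by rewrite f0 addn0.
  case: (H_arrow (ar i iL)) => e; first by have := pos i.+1 iL; rewrite e.
  by rewrite e IH ?addnS // ltnW.
by have := lin L (leqnn L); rewrite fL; lia.
Qed.

Lemma component_of_cycle v : pin setT v v ->
  comp [set x | pin setT v x /\ pin setT x v].
Proof.
move=> vv; set C := [set x | pin setT v x /\ pin setT x v].
have Cv : C v by split.
split; first by exists v.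
  split; first by move=> x [vx _]; exact: path_in_vertex vx.
  move=> x y [vx xv] [vy yv].
  have [L [f [L0 f0 fL ar _]]] := path_in_trans xv vy.
  exists L, f; split => // i iL; split.
    case: (posnP i) => [->|ip]; first by rewrite f0.
    by apply: (path_in_trans vx); rewrite -f0; exact: path_in_arrows ar _ _ ip iL.
  case: (ltnP i L) => il.
    by apply: (path_in_trans _ yv); rewrite -fL; exact: path_in_arrows ar _ _ il (leqnn L).
  have -> : i = L by apply/eqP; rewrite eqn_leq iL il.
  by rewrite fL.
move=> D CD [_ scD]; apply/seteqP; split => [d Dd|]; last exact: CD.
by split; apply: (path_in_weaken (C := D)) => //; apply: scD => //; exact: CD.
Qed.

Lemma components_bounded : exists s : seq (set (vtx k)), (size s <= k)%N /\
  forall C, comp C -> List.In C s.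
Proof.
have basis C : comp C -> exists a : 'I_k, C (cls [:: a]).
  move=> cC; have [al [Cal Hal]] := component_H0 cC.
  have [_ [sub _] _] := cC.
  by have [a ea] := H0_basis (sub _ Cal) Hal; exists a; rewrite -ea.
have [s [sz sP]] := bounded_by_keys set0 basis (fun a C C' => @component_eq C C' _).
by exists s; rewrite card_ord in sz.
Qed.

Lemma Ipath_H be : Ip be -> forall p, H (be p) = p.
Proof.
move=> [ib h0 hp]; elim=> [//|p IH].
case: (H_arrow (ib p)) => e; last by rewrite e IH.
by have := hp p.+1 (ltn0Sn p); rewrite e.
Qed.

Lemma H_pos_brk_proper w a : w <> [::] -> (0 < H (cls (rcons w a)))%N ->
  brk (rcons w a) <> pc a.
Proof.
move=> nw + e; suff -> : cls (rcons w a) = cls [:: a] by rewrite H_single.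
by apply: cls_eq; exists w, [::], a, [::]; rewrite cats1 brk_single.
Qed.

Lemma Ipath_unique be be' : Ip be -> Ip be' -> be 0%N = be' 0%N -> be = be'.
Proof.
move=> [ib _ hp] [ib' _ hp'] e0; apply: funext; elim=> [//|p IH].
have [va vb [w [a [ea eb]]]] := ib p.
have [_ vb' [w' [a' [ea' eb']]]] := ib' p.
have [nw _] := vertex_cls va ea.
have eb2 : be' p.+1 = cls (rcons w a').
  rewrite eb'; apply: cls_eq; apply: pequiv_rcons.
  by apply: cls_pequiv; rewrite -?ea' -?ea ?IH //; exact: (vertex_cls vb' eb').1.
have [_ bwa] := vertex_cls vb eb.
have [_ bwa'] := vertex_cls vb' eb2.
have npa : brk (rcons w a) <> pc a.
  by apply: H_pos_brk_proper => //; rewrite -eb; apply: hp.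
have npa' : brk (rcons w a') <> pc a'.
  by apply: H_pos_brk_proper => //; rewrite -eb2; apply: hp'.
by rewrite eb eb2 (proper_successor_unique nw bwa npa bwa' npa').
Qed.

Lemma Ipaths_bounded : exists s : seq (nat -> vtx k), (size s <= k)%N /\
  forall be, Ip be -> List.In be s.
Proof.
have basis be : Ip be -> exists a : 'I_k, be 0%N = cls [:: a].
  by move=> [/(_ 0%N) [va _ _] h0 _]; exact: H0_basis va h0.
have key_inj a be be' : Ip be -> Ip be' ->
    be 0%N = cls [:: a] -> be' 0%N = cls [:: a] -> be = be'.
  by move=> ib ib' e e'; apply: Ipath_unique; rewrite ?e ?e'.
have [s [sz sP]] := bounded_by_keys (fun=> set0) basis key_inj.
by exists s; rewrite card_ord in sz.
Qed.

Lemma path_in_infinite al : infp al -> forall i j, (i < j)%N -> pin setT (al i) (al j).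
Proof. by move=> ia i j ij; apply: (path_in_arrows (L := j)) => // m _; apply: ia. Qed.

Lemma brk_cat_neq0 x y : x <> [::] -> brk (x ++ y) !=set0 -> brk x !=set0.
Proof.
move=> nx; elim/last_ind: y => [|y c IH]; first by rewrite cats0.
rewrite -rcons_cat => /brk_rcons_neq0 ne; apply: IH; apply: ne.
by case: (x) nx.
Qed.

(* The first three hypotheses say that [drop i w] is the significant part
   of [w]. *)
Lemma sig_height_take w hh i : (i + hh).+1 = size w -> peq w (drop i w) ->
  (forall j, (i < j < size w)%N -> ~ peq w (drop j w)) ->
  forall j, (j <= hh)%N -> sigh (take j.+1 (drop i w)) j.
Proof.
move=> si pi mi j jh.
set v := drop i w.
have sv : size v = hh.+1 by rewrite size_drop; lia.
have sx : size (take j.+1 v) = j.+1 by rewrite size_takel // sv.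
have nx : take j.+1 v <> [::] by move=> e; rewrite e in sx.
exists 0%N; split; first by rewrite sx.
  by rewrite drop0; apply: pequiv_refl.
move=> l /andP[l0 lx] [u1 [u2 [a [s [e1 e2 b1 b2]]]]].
rewrite sx in lx.
set rest := drop j.+1 v.
have ev : v = take j.+1 v ++ rest by rewrite cat_take_drop.
have pv : peq v (drop l v).
  exists u1, u2, a, (s ++ rest); split => //; first by rewrite {1}ev e1 -catA.
  by rewrite {1}ev drop_cat sx lx e2 -catA.
apply: (mi (i + l)%N); first by apply/andP; split; lia.
by rewrite addnC -drop_drop; exact: pequiv_trans pi pv.
Qed.

(* The prefixes of the significant part of a representative of [al N] give
   the beginning of an I-path that joins the tail of [al]. *)
Lemma Ipath_of_positive_tail al N : infp al ->
  (forall p, (N <= p)%N -> (0 < H (al p))%N) ->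
  exists be M, Ip be /\ forall p, al (N + p)%N = be (M + p)%N.
Proof.
move=> ia hN.
have [[w [nw bw ew]] _ _] := ia N.
have [hh sw] := sig_height_exists nw.
have [i [si pi mi]] := sw.
set v := drop i w.
have sv : size v = hh.+1 by rewrite size_drop; lia.
have [x0 v0] : exists x0, v = x0 :: behead v by case: (v) sv => // x0 s _; exists x0.
have eN : cls (take hh.+1 v) = al N.
  by rewrite take_oversize ?sv // ew; apply/esym/cls_eq.
have bv : brk v !=set0 by rewrite -(pequiv_brk pi).
have vt m : (0 < m)%N -> isv (cls (take m v)).
  move=> m0; have nt : take m v <> [::] by case: (m) m0 => // m' _; rewrite v0.
  exists (take m v); split => //.
  by apply: (@brk_cat_neq0 _ (drop m v)) => //; rewrite cat_take_drop.
pose be j := if (j <= hh)%N then cls (take j.+1 v) else al (N + (j - hh))%N.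
exists be, hh; split; last first.
  move=> p; rewrite /be; case: (leqP (hh + p) hh) => hp; last by rewrite addKn.
  have -> : p = 0%N by lia.
  by rewrite !addn0 eN.
split.
- move=> j; rewrite /be; case: (ltngtP j hh) => jh.
  + split; [exact: vt|exact: vt|].
    exists (take j.+1 v), (nth x0 v j.+1); split => //.
    by rewrite (take_nth x0) // sv.
  + by have := ia (N + (j - hh))%N; rewrite -addnS -subSn // ltnW.
  + by rewrite jh eN subSn // subnn addn1; exact: ia.
- by rewrite /be leq0n v0 /= take0 H_single.
- move=> j j0; rewrite /be; case: (leqP j hh) => jh.
    by rewrite (H_cls (sig_height_take si pi mi jh)).
  by apply: hN; apply: leq_addr.
Qed.

Lemma basis_recurrent al : infp al ->
  (forall N, exists2 p, (N <= p)%N & H (al p) = 0%N) ->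
  exists a, forall N, exists2 p, (N <= p)%N & al p = cls [:: a].
Proof.
move=> ia inf0; apply: contrapT => nrec.
have last_visit a : exists Na, forall p, (Na <= p)%N -> al p <> cls [:: a].
  apply: contrapT => nex; apply: nrec; exists a => N0.
  apply: contrapT => nN; apply: nex; exists N0 => q Nq eq1.
  by apply: nN; exists q.
have [Nf hNf] := choice last_visit.
have [p Np Hp] := inf0 (\max_(a : 'I_k) Nf a).
have [va _ _] := ia p; have [a ea] := H0_basis va Hp.
by apply: (hNf a p) => //; exact: leq_trans (leq_bigmax a) Np.
Qed.

Lemma component_of_recurrent al v : infp al ->
  (forall N, exists2 p, (N <= p)%N & al p = v) ->
  exists C, comp C /\ exists N, forall p, (N <= p)%N -> C (al p).
Proof.
move=> ia rec.
have [p1 _ e1] := rec 0%N; have [p2 l2 e2] := rec p1.+1.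
have vv : pin setT v v by rewrite -{1}e1 -e2; exact: (path_in_infinite ia).
exists [set x | pin setT v x /\ pin setT x v]; split; first exact: component_of_cycle.
exists p1 => p pp; have [->|ne] := eqVneq p p1; first by rewrite e1.
have [p3 l3 e3] := rec p.+1.
split; first by rewrite -e1; apply: (path_in_infinite ia); rewrite ltn_neqAle eq_sym ne pp.
by rewrite -e3; exact: (path_in_infinite ia).
Qed.

Lemma infinite_path_dichotomy al : infp al ->
  (exists C, comp C /\ exists N, forall p, (N <= p)%N -> C (al p)) \/
  (exists be N M, Ip be /\ forall p, al (N + p)%N = be (M + p)%N).
Proof.
move=> ia.
have [[N hN]|nN] := pselect (exists N, forall p, (N <= p)%N -> (0 < H (al p))%N).
  by right; have [be [M [ib e]]] := Ipath_of_positive_tail ia hN; exists be, N, M.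
left; have [a rec] : exists a, forall N, exists2 p, (N <= p)%N & al p = cls [:: a].
  apply: basis_recurrent => // N; apply: contrapT => ne; apply: nN; exists N => p Np.
  by rewrite lt0n; apply/negP => /eqP e; apply: ne; exists p.
exact: component_of_recurrent ia rec.
Qed.

End LiftedGraph.

Theorem mainTheorem6 (T : topologicalType) (h : RR -> T) (tau tau' : T -> T)
  (F : T -> T) (n : nat) (gam : 'I_n -> RR -> T) (k : nat)
  (br : 'I_k -> 'I_n) (lo hi : 'I_k -> RR) (ell : 'I_k -> 'I_n) (per : 'I_k -> int) :
  lifted_graph h tau tau' ->
  continuous F ->
  degree_one tau F ->
  sun_like h F gam ->
  basic_partition h tau tau' F gam br lo hi ell per ->
  (* (i) *)
  ((forall C, component h tau tau' F gam br lo hi C ->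
      exists al, C al /\ H h tau tau' F gam br lo hi al = 0%N) /\
   (exists s : seq (set (set (seq 'I_k))), (size s <= k)%N /\
      forall C, component h tau tau' F gam br lo hi C -> List.In C s)) /\
  (* (ii) *)
  ((forall be, Ipath h tau tau' F gam br lo hi be ->
      forall p, H h tau tau' F gam br lo hi (be p) = p) /\
   (exists s : seq (nat -> set (seq 'I_k)), (size s <= k)%N /\
      forall be, Ipath h tau tau' F gam br lo hi be -> List.In be s)) /\
  (* (iii) *)
  (forall al, infinite_path h tau tau' F gam br lo hi al ->
     (exists C, component h tau tau' F gam br lo hi C /\
        exists N, forall p, (N <= p)%N -> C (al p)) \/
     (exists be N M, Ipath h tau tau' F gam br lo hi be /\
        forall p, al (N + p)%N = be (M + p)%N)).
Proof.
move=> [[_ [_ hinj _]] [tauK tau'K ct ct'] htau comps _] Fc F_tau SL BP.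
have {}hinj : injective h by move=> x y; apply: hinj.
have hcc x : ~ range h x -> exists t0, closure (cc h x) `&` range h = [set h t0].
  by move=> /comps [].
split; [split|split; [split|]].
- by move=> C; eapply component_H0; eassumption.
- by eapply components_bounded; eassumption.
- by move=> be; eapply Ipath_H; eassumption.
- by eapply Ipaths_bounded; eassumption.
- by move=> al; eapply infinite_path_dichotomy; eassumption.
Qed.
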